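(* Let $p$ be a prime and let $\lambda=(\lambda_1, \lambda_2, \ldots, \lambda_s)$ be a partition of $d$ with distinct parts $\lambda_1>\lambda_2>\cdots>\lambda_s>0$. Define $$\hat{\lambda}=(\lambda_1^{p-1}, \lambda_2^{p-1}, \ldots, \lambda_s^{p-1}) \vdash (p-1)d,$$ the partition in which each $\lambda_i$ appears exactly $p-1$ times. Then $m(\hat{\lambda})=(p-1)\lambda$, where $m$ is the Mullineux map.
   Context: For a partition $\nu$ and a positive integer $c$, $c\nu$ multiplies every part by $c$. A partition is $p$-regular if no part occurs $p$ or more times. For a $p$-regular partition $\nu$ of $n$, let $D^\nu$ be the simple module over $k\Sigma_n$ ($k$ algebraically closed of characteristic $p$) that is the head of the Specht module $S^\nu$. The Mullineux map $m$ is the bijection on $p$-regular partitions of $n$ defined by $D^\nu \otimes \operatorname{sgn} \cong D^{m(\nu)}$, where $\operatorname{sgn}$ is the sign representation (equivalently, the combinatorial Mullineux bijection). *)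

From mathcomp Require Import all_boot.
Set Implicit Arguments. Unset Strict Implicit. Unset Printing Implicit Defensive.

(* A partition is a weakly decreasing sequence of positive integers
   (row lengths of the Young diagram, top row first). *)
Definition is_partition (s : seq nat) : bool :=
  sorted geq s && all (fun x => 0 < x) s.

Definition p_regular (p : nat) (s : seq nat) : bool :=
  all (fun x => count_mem x s < p) s.

(* Number of rim nodes in each row.  Node (i,j) is in the rim iff
   (i+1,j+1) is not in the diagram, so row i contributes
   s_i - s_{i+1} + 1 nodes (s_i nodes for the last row). *)
Fixpoint rim_counts (s : seq nat) : seq nat :=
  match s with
  | [::] => [::]
  | a :: t => (a - head 0 t + (0 < head 0 t)) :: rim_counts t
  end.

(* The p-rim is made of p-segments:
   each segment starts at the rightmost node of a row and takes the next p
   rim nodes (going down/left along the rim), or the rest of the rim if it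
   has fewer; the next segment starts at the rightmost node of the row
   below the last row visited by the previous segment.  [rem] is the
   remaining capacity of the current segment. *)
Fixpoint prim_take (p rem : nat) (cs : seq nat) : seq nat :=
  match cs with
  | [::] => [::]
  | c :: cs' =>
      let t := minn rem c in
      t :: prim_take p (if rem - t == 0 then p else rem - t) cs'
  end.

Definition prim_rows (p : nat) (s : seq nat) : seq nat :=
  prim_take p p (rim_counts s).

Definition prim_size (p : nat) (s : seq nat) : nat := sumn (prim_rows p s).

Definition prim_remove (p : nat) (s : seq nat) : seq nat :=
  [seq x <- [seq xt.1 - xt.2 | xt <- zip s (prim_rows p s)] | 0 < x].

Fixpoint msymbol_fuel (fuel p : nat) (s : seq nat) : seq (nat * nat) :=
  match fuel with
  | 0 => [::]
  | f.+1 =>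
      if s is [::] then [::]
      else (prim_size p s, size s) :: msymbol_fuel f p (prim_remove p s)
  end.

Definition mullineux_symbol (p : nat) (s : seq nat) : seq (nat * nat) :=
  msymbol_fuel (sumn s) p s.

Definition mullineux_symbol_conj (p : nat) (G : seq (nat * nat)) :=
  [seq (ar.1, ar.1 - ar.2 + ~~ (p %| ar.1)) | ar <- G].

(* [is_mullineux p nu mu] : "m(nu) = mu" for the Mullineux bijection m on
   p-regular partitions; mu is the (unique, since the symbol determines
   a p-regular partition) p-regular partition whose symbol is the
   transformed symbol of nu. *)
Definition is_mullineux (p : nat) (nu mu : seq nat) : bool :=
  [&& is_partition nu, p_regular p nu, is_partition mu, p_regular p mu &
      mullineux_symbol p mu == mullineux_symbol_conj p (mullineux_symbol p nu)].

Definition hat (p : nat) (lam : seq nat) : seq nat :=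
  flatten [seq nseq p.-1 x | x <- lam].

Definition scale_part (c : nat) (lam : seq nat) : seq nat := [seq c * x | x <- lam].

Example ex1 : is_mullineux 3 [:: 3] [:: 2; 1]. Proof. by []. Qed.
Example ex2 : is_mullineux 3 (hat 3 [:: 3; 1]) (scale_part 2 [:: 3; 1]). Proof. by []. Qed.
Example ex3 : is_mullineux 5 (hat 5 [:: 4; 2; 1]) (scale_part 4 [:: 4; 2; 1]). Proof. by []. Qed.

From mathcomp Require Import all_boot zify.
Set Implicit Arguments. Unset Strict Implicit. Unset Printing Implicit Defensive.

(* With n = p - 1, write (p-1)lambda = mu.  Each part m of mu splits as the
   balanced sequence of n parts that differ by at most one and sum to m;
   concatenating them gives lambda-hat.  As long as consecutive parts of mu
   differ by at least n, the p-rim of the spread partition takes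
   min(p, m) nodes from the block of each m and leaves the spread of the
   parts m - p, while the p-rim of mu itself takes min(p, m) from each m.  So
   both partitions have p-rims of the same size at every step, and comparing
   their numbers of rows gives exactly Mullineux's column transformation. *)

(* Rim counts of the rows of [s] when [s] sits on top of a partition whose
   first row has length [h]. *)
Fixpoint rim_counts_above (h : nat) (s : seq nat) : seq nat :=
  match s with
  | [::] => [::]
  | a :: t => (a - head h t + (0 < head h t)) :: rim_counts_above h t
  end.

(* Remaining capacity of the current p-segment after [prim_take p rem cs]. *)
Fixpoint prim_capacity (p rem : nat) (cs : seq nat) : nat :=
  match cs with
  | [::] => rem
  | c :: cs' =>
      let t := minn rem c in
      prim_capacity p (if rem - t == 0 then p else rem - t) cs'
  end.

Definition row_sub (s d : seq nat) : seq nat := [seq xt.1 - xt.2 | xt <- zip s d].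

Lemma rim_counts_cat a b :
  rim_counts (a ++ b) = rim_counts_above (head 0 b) a ++ rim_counts b.
Proof. by elim: a => [|x a IH] //=; rewrite IH; case: a {IH}. Qed.

Lemma size_rim_counts_above h s : size (rim_counts_above h s) = size s.
Proof. by elim: s => [|x s IH] //=; rewrite IH. Qed.

Lemma rim_counts_above_nseq h n a s : 0 < a ->
  rim_counts_above h (nseq n.+1 a ++ s) =
  nseq n 1 ++ (a - head h s + (0 < head h s)) :: rim_counts_above h s.
Proof. by move=> a_gt0; elim: n => [|n /= ->] //=; rewrite subnn a_gt0. Qed.

Lemma prim_take_cons p rem c cs : prim_take p rem (c :: cs) =
  minn rem c :: prim_take p (if rem - minn rem c == 0 then p else rem - minn rem c) cs.
Proof. by []. Qed.

Lemma prim_capacity_cons p rem c cs : prim_capacity p rem (c :: cs) =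
  prim_capacity p (if rem - minn rem c == 0 then p else rem - minn rem c) cs.
Proof. by []. Qed.

Lemma prim_take_cat p rem a b :
  prim_take p rem (a ++ b) =
  prim_take p rem a ++ prim_take p (prim_capacity p rem a) b.
Proof. by elim: a rem => [|x a IH] rem //=; rewrite IH. Qed.

Lemma size_prim_take p rem s : size (prim_take p rem s) = size s.
Proof. by elim: s rem => [|x s IH] rem //=; rewrite IH. Qed.

Lemma prim_take_ones p rem n s : n < rem ->
  prim_take p rem (nseq n 1 ++ s) = nseq n 1 ++ prim_take p (rem - n) s.
Proof.
elim: n rem => [|n IH] rem lt_n_rem /=; first by rewrite subn0.
have -> : minn rem 1 = 1 by lia.
have -> : (rem - 1 == 0) = false by apply/eqP; lia.
by rewrite IH -?subnDA ?add1n //; lia.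
Qed.

Lemma prim_capacity_ones p rem n s : n < rem ->
  prim_capacity p rem (nseq n 1 ++ s) = prim_capacity p (rem - n) s.
Proof.
elim: n rem => [|n IH] rem lt_n_rem /=; first by rewrite subn0.
have -> : minn rem 1 = 1 by lia.
have -> : (rem - 1 == 0) = false by apply/eqP; lia.
by rewrite IH -?subnDA ?add1n //; lia.
Qed.

(* When [b] is nonempty and the p-segment in progress is exhausted exactly at
   the last row of [a], the p-rim of [a ++ b] restarts at the top of [b]. *)
Lemma prim_rows_cat p a b : all (fun x => 0 < x) b ->
  (0 < head 0 b -> prim_capacity p p (rim_counts_above (head 0 b) a) = p) ->
  prim_rows p (a ++ b) = prim_take p p (rim_counts_above (head 0 b) a) ++ prim_rows p b.
Proof.
rewrite /prim_rows rim_counts_cat prim_take_cat.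
by case: b => [|y b] //= /andP [y_gt0 _] ->.
Qed.

Lemma row_sub_cons x y s t : row_sub (x :: s) (y :: t) = (x - y) :: row_sub s t.
Proof. by []. Qed.

Lemma row_sub_nseq n a b s t :
  row_sub (nseq n a ++ s) (nseq n b ++ t) = nseq n (a - b) ++ row_sub s t.
Proof. by elim: n => [|n IH] //=; rewrite -IH. Qed.

Lemma row_sub_cat s1 s2 t1 t2 : size s1 = size t1 ->
  row_sub (s1 ++ s2) (t1 ++ t2) = row_sub s1 t1 ++ row_sub s2 t2.
Proof. by move=> eq_sz; rewrite /row_sub zip_cat // map_cat. Qed.

Lemma row_sub_map s f : row_sub s [seq f x | x <- s] = [seq x - f x | x <- s].
Proof. by elim: s => //= x s <-. Qed.

Lemma nseqSr n (a : nat) : nseq n.+1 a = nseq n a ++ [:: a].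
Proof. by elim: n => //= n <-. Qed.

Definition level_block (n q r : nat) : seq nat := nseq r q.+1 ++ nseq (n - r) q.

Definition balanced (n m : nat) : seq nat := level_block n (m %/ n) (m %% n).

Lemma balanced_eq n q r : r < n -> balanced n (q * n + r) = level_block n q r.
Proof.
move=> lt_r_n; have n_gt0 : 0 < n by lia.
by rewrite /balanced divnMDl // divn_small // addn0 modnMDl modn_small.
Qed.

Lemma balanced0 n : [seq x <- balanced n 0 | 0 < x] = [::].
Proof. by rewrite /balanced div0n mod0n /level_block /= filter_nseq. Qed.

Lemma sumn_balanced n m : 0 < n -> sumn (balanced n m) = m.
Proof.
move=> n_gt0; rewrite /balanced /level_block sumn_cat !sumn_nseq.
have := divn_eq m n; have := ltn_pmod m n_gt0; nia.
Qed.

Lemma head_balanced n m : 0 < n -> 0 < m ->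
  [seq x <- balanced n m | 0 < x] != [::] /\
  head 0 [seq x <- balanced n m | 0 < x] * n < m + n.
Proof.
move=> n_gt0 m_gt0; have lt_r_n := ltn_pmod m n_gt0; have em := divn_eq m n.
rewrite /balanced /level_block filter_cat !filter_nseq.
case: (posnP (m %% n)) => [r0|r_gt0].
  have q_gt0 : 0 < m %/ n by move: em; rewrite r0; case: (m %/ n) => //=; lia.
  rewrite r0 subn0 q_gt0 mul1n.
  by case: n n_gt0 {lt_r_n} r0 em q_gt0 => // k _ r0 em q_gt0 /=; split => //; lia.
by case: (m %% n) r_gt0 em lt_r_n => // r _ em lt_r_n /=; split => //; nia.
Qed.

(* The p-rim (p = n + 1) of the block of a part m = q n + r, sitting on a
   partition with first row h: what it leaves, its size, the number of rows of
   the block, and that the last p-segment ends exactly at the block's bottom. *)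
Definition block_prim_spec (n h q r : nat) : Prop :=
  let X := [seq x <- level_block n q r | 0 < x] in
  let D := prim_take n.+1 n.+1 (rim_counts_above h X) in
  [/\ [seq x <- row_sub X D | 0 < x] = [seq x <- balanced n (q * n + r - n.+1) | 0 < x],
      sumn D = minn n.+1 (q * n + r), size X = minn n (q * n + r) &
      (0 < h -> prim_capacity n.+1 n.+1 (rim_counts_above h X) = n.+1)].

Lemma level_block0_pos n r : [seq x <- level_block n 0 r | 0 < x] = nseq r 1.
Proof. by rewrite /level_block filter_cat !filter_nseq mul1n /= cats0. Qed.

Lemma level_blockS_pos n q r :
  [seq x <- level_block n q.+1 r | 0 < x] = level_block n q.+1 r.
Proof. by apply/all_filterP; rewrite /level_block all_cat !all_nseq !orbT. Qed.

Lemma block_prim_small n r : r < n -> block_prim_spec n 0 0 r.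
Proof.
move=> lt_r_n; rewrite /block_prim_spec level_block0_pos.
rewrite (_ : 0 * n + r - n.+1 = 0) ?balanced0; last by lia.
case: r lt_r_n => [|r] lt_r_n; first by split => //; lia.
rewrite -[nseq r.+1 1]cats0 rim_counts_above_nseq // prim_take_ones; last by lia.
rewrite prim_take_cons (_ : minn (n.+1 - r) _ = 1); last by lia.
split => //.
- by rewrite cats0 nseqSr row_sub_nseq filter_cat filter_nseq.
- by rewrite sumn_cat sumn_nseq /=; lia.
- by rewrite cats0 size_nseq; lia.
Qed.

(* Block q^n, q > 0: the rim takes one node from each row and a second one
   from the last row, unless q = 1 and nothing lies below. *)
Lemma block_prim_flat n h q : h < q.+1 -> block_prim_spec n.+1 h q.+1 0.
Proof.
move=> lt_h_q; rewrite /block_prim_spec level_blockS_pos /level_block subn0 cat0s.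
rewrite -[nseq n.+1 q.+1]cats0 rim_counts_above_nseq //.
rewrite prim_take_ones; last by lia.
rewrite prim_capacity_ones; last by lia.
rewrite prim_take_cons prim_capacity_cons [head h [::]]/= !cats0 nseqSr.
rewrite (_ : n.+2 - n = 2); last by lia.
case: (leqP 2 (q.+1 - h + (0 < h))) => [two_le|lt_two].
  rewrite subnn eqxx.
  case: q lt_h_q two_le => [|q] lt_h_q two_le; first by case: h lt_h_q two_le.
  rewrite (_ : q.+2 * n.+1 + 0 - n.+2 = q * n.+1 + n); last by nia.
  rewrite balanced_eq // /level_block (_ : n.+1 - n = 1); last by lia.
  rewrite row_sub_nseq; split => //.
  - by rewrite /row_sub /= (_ : q.+2 - 2 = q) //; lia.
  - by rewrite sumn_cat sumn_nseq /=; nia.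
  - by rewrite size_cat size_nseq /=; nia.
have [-> ->] : q = 0 /\ h = 0 by case: h lt_h_q lt_two; lia.
rewrite (_ : 1 * n.+1 + 0 - n.+2 = 0) ?balanced0; last by lia.
rewrite row_sub_nseq filter_cat filter_nseq.
by split => //; rewrite ?sumn_cat ?size_cat ?sumn_nseq ?size_nseq /=; lia.
Qed.

(* Block (q+1)^r q^(n-r), 0 < r < n: the rim takes one node from each row and
   a second one from the row where the block steps down. *)
Lemma block_prim_step n h q r : r.+1 < n -> block_prim_spec n h q.+1 r.+1.
Proof.
move=> lt_r_n; rewrite /block_prim_spec level_blockS_pos /level_block.
have [j ej] : exists j, n - r.+1 = j.+1 by exists (n - r.+2); lia.
rewrite ej rim_counts_above_nseq // -[nseq j.+1 q.+1]cats0 rim_counts_above_nseq //.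
rewrite prim_take_ones; last by lia.
rewrite prim_capacity_ones; last by lia.
rewrite prim_take_cons prim_capacity_cons [head h [::]]/= !cats0 [head h _]/=.
rewrite (_ : minn (n.+1 - r) (q.+2 - q.+1 + 1) = 2); last by lia.
rewrite (_ : (n.+1 - r - 2 == 0) = false); last by apply/eqP; lia.
rewrite (_ : n.+1 - r - 2 = j.+1); last by lia.
rewrite prim_take_ones; last by lia.
rewrite prim_capacity_ones; last by lia.
rewrite prim_take_cons prim_capacity_cons (_ : j.+1 - j = 1); last by lia.
rewrite (_ : minn 1 (q.+1 - h + (0 < h)) = 1); last by case: (posnP h); lia.
rewrite subnn eqxx (_ : q.+1 * n + r.+1 - n.+1 = q * n + r); last by nia.
rewrite balanced_eq; last by lia.
rewrite /level_block (_ : n - r = j.+2); last by lia.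
split => //.
- rewrite [nseq r.+1 q.+2]nseqSr -catA row_sub_nseq [nseq j.+1 q.+1]nseqSr.
  rewrite [_ ++ _ ++ _]/= row_sub_cons row_sub_nseq /=.
  rewrite -[q :: nseq j q]/(nseq j.+1 q) nseqSr /row_sub /=.
  by rewrite !subn1 !subSS subn0.
- by rewrite sumn_cat sumn_nseq /= sumn_cat sumn_nseq /=; nia.
- by rewrite size_cat !size_nseq; nia.
Qed.

Lemma block_prim n h q r : 0 < n -> r < n -> (0 < h -> h * n < q * n + r) ->
  block_prim_spec n h q r.
Proof.
move=> n_gt0 lt_r_n h_below.
case: q h_below => [|q] h_below.
  have -> : h = 0 by case: (posnP h) => // /h_below; nia.
  exact: block_prim_small.
case: r lt_r_n h_below => [|r] lt_r_n h_below.
  case: n n_gt0 lt_r_n h_below => // n _ _ h_below.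
  by apply: block_prim_flat; case: (posnP h) => [->|/h_below] //; nia.
exact: block_prim_step.
Qed.

Definition spread (n : nat) (mu : seq nat) : seq nat :=
  [seq x <- flatten [seq balanced n m | m <- mu] | 0 < x].

Definition gapped (n : nat) (mu : seq nat) : bool :=
  sorted (fun x y => y + n <= x) mu && all (fun x => 0 < x) mu.

Lemma gapped_tail n m t : gapped n (m :: t) -> gapped n t.
Proof. by case/andP=> /path_sorted sorted_t /andP [_ pos_t]; apply/andP. Qed.

Lemma gapped_partition n mu : gapped n mu -> is_partition mu.
Proof.
case/andP=> sorted_mu pos_mu; apply/andP; split => //.
by apply: sub_sorted sorted_mu => x y /=; lia.
Qed.

Lemma spread_cons n m t :
  spread n (m :: t) = [seq x <- balanced n m | 0 < x] ++ spread n t.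
Proof. by rewrite /spread /= filter_cat. Qed.

Lemma spread_pos n mu : all (fun x => 0 < x) (spread n mu).
Proof. exact: filter_all. Qed.

Lemma spread_filter_pos n s : spread n [seq x <- s | 0 < x] = spread n s.
Proof.
elim: s => [|[|x] s IH] //=; first by rewrite IH spread_cons balanced0.
by rewrite !spread_cons IH.
Qed.

Lemma sumn_filter_pos s : sumn [seq x <- s | 0 < x] = sumn s.
Proof. by elim: s => [|[|x] s IH] //=; rewrite IH. Qed.

Lemma sumn_spread n mu : 0 < n -> sumn (spread n mu) = sumn mu.
Proof.
move=> n_gt0; elim: mu => [|m t IH] //.
by rewrite spread_cons sumn_cat sumn_filter_pos sumn_balanced // IH.
Qed.

Lemma prim_spread n mu : 0 < n -> gapped n mu ->
  [/\ [seq x <- row_sub (spread n mu) (prim_rows n.+1 (spread n mu)) | 0 < x]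
        = spread n [seq m - n.+1 | m <- mu],
      sumn (prim_rows n.+1 (spread n mu)) = sumn [seq minn n.+1 m | m <- mu] &
      size (spread n mu) = sumn [seq minn n m | m <- mu]].
Proof.
move=> n_gt0; elim: mu => [|m t IH] // gapped_mt.
have [rem_t rim_t size_t] := IH (gapped_tail gapped_mt).
have h_below : 0 < head 0 (spread n t) -> head 0 (spread n t) * n < m.
  case: t gapped_mt {IH rem_t rim_t size_t} => [|m' t] //.
  case/andP=> /andP [gap _] /and3P [_ m'_gt0 _].
  rewrite spread_cons; have [+ head_lt] := head_balanced n_gt0 m'_gt0.
  by case: [seq x <- balanced n m' | 0 < x] head_lt => //= y l head_lt _; lia.
have em := divn_eq m n.
have [rem_m rim_m size_m cap_m] :=
  block_prim (q := m %/ n) n_gt0 (ltn_pmod m n_gt0) (ecast z (0 < _ -> _ < z) em h_below).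
rewrite -em in rem_m rim_m size_m.
rewrite spread_cons prim_rows_cat ?spread_pos //.
rewrite row_sub_cat ?size_prim_take ?size_rim_counts_above //.
by rewrite filter_cat rem_m rem_t spread_cons sumn_cat rim_m rim_t size_cat size_m size_t.
Qed.

(* With gaps of at least n, every row of mu has at least n + 1 rim nodes, so
   each row alone fills a p-segment. *)
Lemma prim_rows_gapped n mu : 0 < n -> gapped n mu ->
  prim_rows n.+1 mu = [seq minn n.+1 m | m <- mu].
Proof.
move=> n_gt0; rewrite /prim_rows.
elim: mu => [|m t IH] // gapped_mt.
have gapped_t := gapped_tail gapped_mt; rewrite map_cons -(IH gapped_t).
case: t gapped_mt {IH gapped_t} => [|m' t]; first by rewrite /= subn0 addn0.
case/andP=> /andP [gap _] /and3P [_ m'_gt0 _].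
rewrite [rim_counts _]/= prim_take_cons m'_gt0.
have -> : minn n.+1 (m - m' + 1) = n.+1 by lia.
by rewrite subnn eqxx (_ : minn n.+1 m = n.+1) //; lia.
Qed.

Lemma prim_remove_gapped n mu : 0 < n -> gapped n mu ->
  prim_remove n.+1 mu = [seq x <- [seq m - n.+1 | m <- mu] | 0 < x].
Proof.
move=> n_gt0 gapped_mu.
rewrite /prim_remove prim_rows_gapped // -/(row_sub _ _) row_sub_map.
by congr filter; apply: eq_map => x; lia.
Qed.

Lemma gapped_prim_remove n mu : 0 < n -> gapped n mu ->
  gapped n (prim_remove n.+1 mu).
Proof.
move=> n_gt0 gapped_mu; rewrite prim_remove_gapped // filter_map.
case/andP: gapped_mu => sorted_mu _; apply/andP; split; last first.
  by rewrite all_map; apply: filter_all.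
have gap_trans : transitive (fun x y => y + n <= x) by move=> y x z /=; lia.
rewrite sorted_map.
apply: sub_in_sorted (filter_all _ _) (sorted_filter gap_trans _ sorted_mu).
by move=> x y; rewrite !inE /=; lia.
Qed.

Lemma sum_minn_leS n t :
  sumn [seq minn n m | m <- t] <= sumn [seq minn n.+1 m | m <- t].
Proof. by elim: t => //= m t IH; lia. Qed.

(* All parts but the last are at least p, so the first column of the
   symbol of spread n mu is (sum_m minn p m, sum_m minn n m); Mullineux's
   transformation turns it into (sum_m minn p m, size mu). *)
Lemma symbol_column_conj n m t : 0 < n -> gapped n (m :: t) ->
  sumn [seq minn n.+1 x | x <- m :: t] - sumn [seq minn n x | x <- m :: t]
  + ~~ (n.+1 %| sumn [seq minn n.+1 x | x <- m :: t]) = (size t).+1.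
Proof.
move=> n_gt0; elim: t m => [|m' t IH] m gapped_mt.
  have m_gt0 : 0 < m by case/andP: gapped_mt => _ /andP [].
  rewrite /= !addn0; case: (leqP n.+1 m) => le_p_m.
    by rewrite (_ : minn n m = n) ?dvdnn; lia.
  rewrite (_ : minn n m = m) ?subnn; last by lia.
  by case: (boolP (n.+1 %| m)) => // /(dvdn_leq m_gt0); lia.
have := IH m' (gapped_tail gapped_mt).
case/andP: gapped_mt => /andP [gap _] /and3P [_ m'_gt0 _] /=.
rewrite (_ : minn n.+1 m = n.+1); last by lia.
rewrite (_ : minn n m = n) ?(dvdn_addr _ (dvdnn n.+1)); last by lia.
by move: (sum_minn_leS n (m' :: t)) => /=; lia.
Qed.

Lemma msymbol_fuel_cons f p s : s != [::] ->
  msymbol_fuel f.+1 p s = (prim_size p s, size s) :: msymbol_fuel f p (prim_remove p s).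
Proof. by case: s. Qed.

Lemma msymbol_fuel_spread n f mu : 0 < n -> gapped n mu ->
  msymbol_fuel f n.+1 mu =
  mullineux_symbol_conj n.+1 (msymbol_fuel f n.+1 (spread n mu)).
Proof.
move=> n_gt0; elim: f mu => [|f IH] [|m t] gapped_mt //.
have m_gt0 : 0 < m by case/andP: gapped_mt => _ /andP [].
have [rem_mt rim_mt size_mt] := prim_spread n_gt0 gapped_mt.
have spread_neq0 : spread n (m :: t) != [::].
  by rewrite spread_cons; case: (head_balanced n_gt0 m_gt0); case: (filter _ _).
have rem_spread : prim_remove n.+1 (spread n (m :: t)) = spread n (prim_remove n.+1 (m :: t)).
  by rewrite (prim_remove_gapped n_gt0 gapped_mt) spread_filter_pos -rem_mt.
rewrite !msymbol_fuel_cons // rem_spread /mullineux_symbol_conj map_cons.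
rewrite -/(mullineux_symbol_conj _ _) -IH; last exact: gapped_prim_remove.
rewrite /prim_size rim_mt size_mt prim_rows_gapped // [(_, _).1]/= [(_, _).2]/=.
by rewrite (symbol_column_conj n_gt0 gapped_mt).
Qed.

Lemma hat_cons p x t : hat p (x :: t) = nseq p.-1 x ++ hat p t.
Proof. by []. Qed.

Lemma hat_spread n lam : 0 < n -> all (fun x => 0 < x) lam ->
  hat n.+1 lam = spread n (scale_part n lam).
Proof.
move=> n_gt0; elim: lam => [|x t IH] // /andP [x_gt0 pos_t].
rewrite hat_cons /scale_part map_cons -/(scale_part n t) spread_cons -IH //.
rewrite (_ : n * x = x * n + 0); last by rewrite addn0 mulnC.
by rewrite balanced_eq // /level_block subn0 filter_cat !filter_nseq x_gt0 !mul1n.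
Qed.

Lemma gapped_scale_part n lam : 0 < n -> sorted gtn lam -> all (fun x => 0 < x) lam ->
  gapped n (scale_part n lam).
Proof.
move=> n_gt0 sorted_lam pos_lam; apply/andP; split.
  by rewrite sorted_map; apply: sub_sorted sorted_lam => x y /=; nia.
by rewrite all_map; apply: sub_all pos_lam => x /=; nia.
Qed.

Lemma path_geq_nseq x k s : path geq x (nseq k x ++ s) = path geq x s.
Proof. by elim: k => //= k ->; rewrite leqnn. Qed.

Lemma hat_sorted p lam : sorted gtn lam -> sorted geq (hat p lam).
Proof.
case: p => [|[|k]]; try by rewrite /hat => _; elim: lam.
elim: lam => [|x t IH] // sorted_xt.
rewrite hat_cons /= path_geq_nseq.
case: t sorted_xt IH => [|y t] //= /andP [lt_y_x sorted_t] IH.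
by rewrite (IH sorted_t) andbT ltnW.
Qed.

Lemma count_hat p lam y : count_mem y (hat p lam) = p.-1 * count_mem y lam.
Proof.
elim: lam => [|x t IH] /=; first by rewrite muln0.
by rewrite hat_cons count_cat count_nseq IH mulnDr mulnC.
Qed.

Lemma hat_p_regular p lam : 0 < p -> uniq lam -> p_regular p (hat p lam).
Proof.
move=> p_gt0 uniq_lam; apply/allP => y _.
by rewrite count_hat count_uniq_mem //; case: (y \in lam); lia.
Qed.

Lemma uniq_p_regular p s : 1 < p -> uniq s -> p_regular p s.
Proof.
move=> p_gt1 uniq_s; apply/allP => y _.
by rewrite count_uniq_mem //; case: (y \in s) => //; exact: ltnW.
Qed.

Theorem proposition7p3 (p : nat) (lam : seq nat) :
  prime p -> sorted gtn lam -> all (fun x => 0 < x) lam ->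
  is_mullineux p (hat p lam) (scale_part p.-1 lam).
Proof.
move=> p_prime sorted_lam pos_lam.
have p_gt1 := prime_gt1 p_prime.
case: p p_prime p_gt1 => [|n] // _ p_gt1; rewrite [n.+1.-1]/=.
have n_gt0 : 0 < n by lia.
have gapped_mu := gapped_scale_part n_gt0 sorted_lam pos_lam.
have uniq_lam : uniq lam := sorted_uniq (rev_trans ltn_trans) ltnn sorted_lam.
apply/and5P; split.
- by apply/andP; split; [exact: hat_sorted | rewrite hat_spread // spread_pos].
- exact: hat_p_regular.
- exact: gapped_partition gapped_mu.
- apply: uniq_p_regular; rewrite // map_inj_uniq // => a b /eqP.
  by rewrite eqn_pmul2l // => /eqP.
- by rewrite hat_spread // /mullineux_symbol sumn_spread // msymbol_fuel_spread.
Qed.
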